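(* $\chi_i'(S_{C_6}^n)=3$ for every positive integer $n$, where $C_6$ is the cycle on $6$ vertices.
   Context: For a graph $H$ with at least one edge, an injective edge $k$-coloring is a map $c:E(H)\to\{1,\dots,k\}$ such that whenever $e_1=xy$, $e_2=yz$, $e_3=zu$ are edges of $H$ with $x,y,z$ distinct and $u\notin\{y,z\}$ (the case $u=x$ being allowed), we have $c(e_1)\ne c(e_3)$. The injective chromatic index $\chi_i'(H)$ is the least $k$ for which such a coloring exists. For a graph $G$ and positive integer $n$, the generalized Sierpiński graph $S_G^n$ has vertex set $V(G)^n$, and $(u_1,\dots,u_n)$, $(v_1,\dots,v_n)$ are adjacent if and only if there is $d\in\{1,\dots,n\}$ with $u_i=v_i$ for $i<d$, $u_dv_d\in E(G)$, and $u_i=v_d$, $v_i=u_d$ for all $i>d$. *)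

From mathcomp Require Import all_boot.
Set Implicit Arguments. Unset Strict Implicit. Unset Printing Implicit Defensive.

(* A simple graph is a symmetric irreflexive boolean relation on a finType. *)

Definition C6 : rel 'I_6 :=
  fun i j => (val j == (val i).+1 %% 6) || (val i == (val j).+1 %% 6).

Definition sierpinski {T : finType} (G : rel T) (n : nat) : rel {ffun 'I_n -> T} :=
  fun u v => [exists d : 'I_n,
    [&& [forall i : 'I_n, (i < d) ==> (u i == v i)],
        G (u d) (v d) &
        [forall i : 'I_n, (d < i) ==> ((u i == v d) && (v i == u d))]]].

Arguments sierpinski {T} G n _ _.

(* An injective edge k-coloring of the graph H (edge relation adj): a color
   c x y in 'I_k (colors {0..k-1} instead of {1..k}) assigned to each edge,
   well defined on unordered edges (c x y = c y x), such that for every path-or-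
   triangle x-y-z-u with x,y,z distinct and u not in {y,z}, c(xy) <> c(zu). *)
Definition inj_edge_coloring {V : finType} (adj : rel V) (k : nat)
    (c : V -> V -> 'I_k) : Prop :=
  (forall x y, adj x y -> c x y = c y x) /\
  (forall x y z u, adj x y -> adj y z -> adj z u ->
     x != y -> y != z -> x != z -> u != y -> u != z ->
     c x y <> c z u).

Definition inj_edge_colorable {V : finType} (adj : rel V) (k : nat) : Prop :=
  exists c : V -> V -> 'I_k, inj_edge_coloring adj c.

Definition inj_chromatic_index_is {V : finType} (adj : rel V) (k : nat) : Prop :=
  inj_edge_colorable adj k /\ forall k', k' < k -> ~ inj_edge_colorable adj k'.

From mathcomp Require Import all_boot zify.
Set Implicit Arguments. Unset Strict Implicit. Unset Printing Implicit Defensive.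

(* S_{C6}^(m+1) consists of 6^m copies of C6 (the edges of the last level),
   joined by bridges: the edge of level d < m joins w a b..b to w b a..a.
   Every vertex lies on at most one bridge, so whenever the middle edge of a
   path x-y-z-u is a bridge, both outer edges lie in copies.  Colour the copy
   whose last index coordinate is t by a fixed injective colouring of C6
   depending on t, the bridges of level m-1 by 1 or 2 according to the C6 edge
   they duplicate, and all lower bridges by 0; the constraints left over are
   statements about C6 alone, checked by computation.  Three colours are
   necessary because the edges 01, 23, 45 of one copy pairwise end a path of
   length three. *)

(* The fintype quantifiers over 'I_6 do not reduce under vm_compute (cardinals are
   locked), so finite facts about C6 are checked on this explicit enumeration. *)
Definition ord6_enum : seq 'I_6 :=
  [:: Ordinal (isT : 0 < 6); Ordinal (isT : 1 < 6); Ordinal (isT : 2 < 6);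
      Ordinal (isT : 3 < 6); Ordinal (isT : 4 < 6); Ordinal (isT : 5 < 6)].

Lemma all6P (P : pred 'I_6) : all P ord6_enum -> forall a, P a.
Proof. by move=> /allP HP [[|[|[|[|[|[|k]]]]]] // Hk]; apply: HP. Qed.

Local Notation all6 P := (all P ord6_enum).

Lemma C6_irrefl (a : 'I_6) : C6 a a = false.
Proof.
have: all6 (fun a => ~~ C6 a a) by vm_compute.
by move/all6P/(_ a)/negbTE.
Qed.

Lemma C6C (a b : 'I_6) : C6 a b = C6 b a.
Proof. by rewrite /C6 orbC. Qed.

Lemma C6_neq (a b : 'I_6) : C6 a b -> a != b.
Proof. by apply: contraTneq => ->; rewrite C6_irrefl. Qed.

Lemma C6_triangle_free (a b c : 'I_6) : C6 a b -> C6 b c -> ~~ C6 a c.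
Proof.
have: all6 (fun a => all6 (fun b => all6 (fun c => [==> C6 a b, C6 b c => ~~ C6 a c])))
  by vm_compute.
by move/all6P/(_ a)/all6P/(_ b)/all6P/(_ c) => + ab bc; rewrite ab bc.
Qed.

Definition color (k : nat) : 'I_3 := Ordinal (ltn_pmod k (isT : 0 < 3)).

(* In copy t an edge of C6 gets the colour of its even endpoint; the even
   vertices 0, 2, 4 get distinct colours, colour 0 going to t or its antipode. *)
Definition star_table : seq (seq nat) :=
  [:: [:: 0; 2; 1]; [:: 1; 2; 0]; [:: 1; 0; 2]; [:: 0; 1; 2]; [:: 2; 1; 0]; [:: 2; 0; 1]].

Definition copy_color (t a b : 'I_6) : 'I_3 :=
  color (nth 0 (nth [::] star_table t) ((if odd a then b else a) %/ 2)).

Definition bridge_color (a b : 'I_6) : 'I_3 :=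
  color (if odd (if val b == a.+1 %% 6 then a else b) then 2 else 1).

Lemma copy_colorC (t a b : 'I_6) : C6 a b -> copy_color t a b = copy_color t b a.
Proof.
have: all6 (fun t => all6 (fun a => all6 (fun b =>
  C6 a b ==> (copy_color t a b == copy_color t b a)))) by vm_compute.
by move/all6P/(_ t)/all6P/(_ a)/all6P/(_ b) => + ab; rewrite ab => /eqP.
Qed.

Lemma bridge_colorC (a b : 'I_6) : C6 a b -> bridge_color a b = bridge_color b a.
Proof.
have: all6 (fun a => all6 (fun b => C6 a b ==> (bridge_color a b == bridge_color b a)))
  by vm_compute.
by move/all6P/(_ a)/all6P/(_ b) => + ab; rewrite ab => /eqP.
Qed.

Lemma bridge_color_neq0 (a b : 'I_6) : bridge_color a b != ord0.
Proof. by rewrite /bridge_color; case: odd. Qed.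

Lemma copy_color_inj (t a b c e : 'I_6) :
  C6 a b -> C6 b c -> C6 c e -> a != c -> e != b -> copy_color t a b != copy_color t c e.
Proof.
have: all6 (fun t => all6 (fun a => all6 (fun b => all6 (fun c => all6 (fun e =>
  [==> C6 a b, C6 b c, C6 c e, a != c, e != b =>
       copy_color t a b != copy_color t c e]))))) by vm_compute.
move/all6P/(_ t)/all6P/(_ a)/all6P/(_ b)/all6P/(_ c)/all6P/(_ e).
by move=> + ab bc ce ac eb; rewrite ab bc ce ac eb.
Qed.

Lemma copy_color_low (t c e : 'I_6) : C6 t c -> C6 c e -> e != t -> copy_color t c e != ord0.
Proof.
have: all6 (fun t => all6 (fun c => all6 (fun e =>
  [==> C6 t c, C6 c e, e != t => copy_color t c e != ord0]))) by vm_compute.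
by move/all6P/(_ t)/all6P/(_ c)/all6P/(_ e) => + tc ce et; rewrite tc ce et.
Qed.

Lemma copy_color_low_bridge (a b c e : 'I_6) :
  C6 a b -> C6 c b -> C6 a e -> copy_color b c b != copy_color a a e.
Proof.
have: all6 (fun a => all6 (fun b => all6 (fun c => all6 (fun e =>
  [==> C6 a b, C6 c b, C6 a e => copy_color b c b != copy_color a a e]))))
  by vm_compute.
by move/all6P/(_ a)/all6P/(_ b)/all6P/(_ c)/all6P/(_ e) => + ab cb ae; rewrite ab cb ae.
Qed.

Lemma copy_color_top_bridge (a b c e : 'I_6) :
  C6 a b -> C6 c b -> C6 a e -> copy_color a c b != copy_color b a e.
Proof.
have: all6 (fun a => all6 (fun b => all6 (fun c => all6 (fun e =>
  [==> C6 a b, C6 c b, C6 a e => copy_color a c b != copy_color b a e]))))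
  by vm_compute.
by move/all6P/(_ a)/all6P/(_ b)/all6P/(_ c)/all6P/(_ e) => + ab cb ae; rewrite ab cb ae.
Qed.

Lemma bridge_color_top (a b c e : 'I_6) :
  C6 b a -> C6 b c -> C6 c e -> e != b -> bridge_color b a != copy_color a c e.
Proof.
have: all6 (fun a => all6 (fun b => all6 (fun c => all6 (fun e =>
  [==> C6 b a, C6 b c, C6 c e, e != b => bridge_color b a != copy_color a c e]))))
  by vm_compute.
move/all6P/(_ a)/all6P/(_ b)/all6P/(_ c)/all6P/(_ e).
by move=> + ba bc ce eb; rewrite ba bc ce eb.
Qed.

Section SierpinskiC6.

Variable m : nat.
Local Notation vertex := {ffun 'I_m.+1 -> 'I_6}.
Implicit Types (x y z u : vertex) (d i : 'I_m.+1).

(* level x y d: xy is an edge of S^(m+1) whose first differing coordinate is d.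
   Level m edges lie inside the copies of C6; lower levels are bridges. *)
Definition level x y d : bool :=
  [&& [forall i : 'I_m.+1, (i < d) ==> (x i == y i)], C6 (x d) (y d) &
      [forall i : 'I_m.+1, (d < i) ==> (x i == y d) && (y i == x d)]].

Lemma level_prefix x y d i : level x y d -> i < d -> x i = y i.
Proof. by case/and3P=> /forallP/(_ i)/implyP H _ _ /H/eqP. Qed.

Lemma level_adj x y d : level x y d -> C6 (x d) (y d).
Proof. by case/and3P. Qed.

Lemma level_suffixl x y d i : level x y d -> d < i -> x i = y d.
Proof. by case/and3P=> _ _ /forallP/(_ i)/implyP H /H/andP[/eqP]. Qed.

Lemma level_suffixr x y d i : level x y d -> d < i -> y i = x d.
Proof. by case/and3P=> _ _ /forallP/(_ i)/implyP H /H/andP[_ /eqP]. Qed.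

Lemma levelC x y d : level x y d = level y x d.
Proof.
rewrite /level C6C; congr [&& _, _ & _]; apply: eq_forallb => i.
  by rewrite eq_sym.
by rewrite andbC.
Qed.

Lemma level_inj x y d d' : level x y d -> level x y d' -> d = d'.
Proof.
wlog lt_dd' : d d' / d < d'.
  move=> wlog_lt H H'; case: (ltngtP d d') => [lt|lt|/val_inj //].
    exact: wlog_lt H H'.
  by apply/esym: (wlog_lt _ _ lt H' H).
by move=> H H'; move: (level_adj H); rewrite (level_prefix H' lt_dd') C6_irrefl.
Qed.

Lemma bridge_or_copy d : d < m \/ d = ord_max.
Proof.
have := ltn_ord d; rewrite ltnS leq_eqVlt => /orP[/eqP dm|]; last by left.
by right; apply: val_inj.
Qed.

Lemma bridge_last x y d : level x y d -> d < m -> y ord_max = x d.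
Proof. exact: (@level_suffixr x y d ord_max). Qed.

(* Every vertex lies on at most one bridge: the bridges at y have their level at
   the start of the constant tail of y. *)
Lemma bridge_unique x y z d d' :
  level x y d -> level y z d' -> d < m -> d' < m -> x = z.
Proof.
move=> H H' dm d'm; have yl := bridge_last H dm.
have yl' : y ord_max = z d' by exact: (@level_suffixl y z d' ord_max H' d'm).
case: (ltngtP d d') => [lt|lt|/val_inj eq_dd'].
- by move: (level_adj H'); rewrite (level_suffixr H lt) -yl yl' C6_irrefl.
- by move: (level_adj H); rewrite (level_suffixl H' lt) -yl' yl C6_irrefl.
- subst d'; apply/ffunP => i; case: (ltngtP i d) => [lt|lt|/val_inj->].
  + by rewrite (level_prefix H lt) (level_prefix H' lt).
  + by rewrite (level_suffixl H lt) (level_suffixr H' lt).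
  + by rewrite -yl yl'.
Qed.

Lemma copy_eq x y z :
  level x y ord_max -> level y z ord_max -> x ord_max = z ord_max -> x = z.
Proof.
move=> H H' E; apply/ffunP => i; case: (bridge_or_copy i) => [lt|->//].
by rewrite (level_prefix H lt) (level_prefix H' lt).
Qed.

(* The copy containing x is indexed by x_0 .. x_{m-1}; its colouring depends only
   on x_{m-1} (for m = 0 there is a single copy). *)
Definition copy_label x : 'I_6 := if m == 0 then ord0 else x (inord m.-1).

Lemma copy_label_level x y : level x y ord_max -> copy_label x = copy_label y.
Proof.
rewrite /copy_label; case: eqP => // /eqP m0 H.
by apply: level_prefix H _; rewrite /= inordK; lia.
Qed.

Lemma copy_label_top y d : d.+1 = m -> copy_label y = y d.
Proof.
move=> dm; rewrite /copy_label ifN; last by lia.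
by rewrite (_ : inord m.-1 = d) //; apply: val_inj; rewrite /= inordK; lia.
Qed.

Lemma low_bridge_label x y d : level x y d -> d.+1 < m -> copy_label y = x d.
Proof.
move=> H dm; rewrite /copy_label ifN; last by lia.
by apply: level_suffixr H _; rewrite /= inordK; lia.
Qed.

Definition level_color x y d : 'I_3 :=
  if d.+1 < m then ord0
  else if d.+1 == m then bridge_color (x d) (y d)
  else copy_color (copy_label x) (x d) (y d).

Lemma level_color_low x y d : d.+1 < m -> level_color x y d = ord0.
Proof. by rewrite /level_color => ->. Qed.

Lemma level_color_top x y d : d.+1 = m -> level_color x y d = bridge_color (x d) (y d).
Proof. by rewrite /level_color => ->; rewrite ltnn eqxx. Qed.

Lemma level_color_copy x y :
  level_color x y ord_max = copy_color (copy_label x) (x ord_max) (y ord_max).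
Proof. by rewrite /level_color /= ltnNge leqnSn gtn_eqF. Qed.

Lemma bridge_kind d : d < m -> d.+1 < m \/ d.+1 = m.
Proof. by rewrite leq_eqVlt => /orP[/eqP|]; auto. Qed.

Lemma level_colorC x y d : level x y d -> level_color x y d = level_color y x d.
Proof.
move=> H; have xy := level_adj H; case: (bridge_or_copy d) => [/bridge_kind[] dm|dm].
- by rewrite !level_color_low.
- by rewrite !level_color_top // bridge_colorC.
- by subst d; rewrite !level_color_copy (copy_label_level H) copy_colorC.
Qed.

Lemma path_middle_bridge x y z u d :
  level x y ord_max -> level y z d -> level z u ord_max -> d < m ->
  level_color x y ord_max != level_color z u ord_max.
Proof.
move=> H1 H2 H3 dm; rewrite !level_color_copy (copy_label_level H1).
have yl : y ord_max = z d by exact: (@level_suffixl y z d ord_max H2 dm).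
have zl : z ord_max = y d by exact: bridge_last H2 dm.
have xz : C6 (x ord_max) (z d) by rewrite -yl level_adj.
have yu : C6 (y d) (u ord_max) by rewrite -zl level_adj.
have yz := level_adj H2; have H2' : level z y d by rewrite levelC.
rewrite yl zl; case: (bridge_kind dm) => dm'.
- rewrite (low_bridge_label H2 dm') (low_bridge_label H2' dm').
  exact: copy_color_low_bridge.
- rewrite (copy_label_top z dm') (copy_label_top y dm').
  exact: copy_color_top_bridge.
Qed.

Lemma path_bridge_copy x y z u d :
  level x y d -> level y z ord_max -> level z u ord_max -> d < m -> u != y ->
  level_color x y d != level_color z u ord_max.
Proof.
move=> H1 H2 H3 dm uy; rewrite level_color_copy -(copy_label_level H2).
have yl := bridge_last H1 dm.
have uyl : u ord_max != x d.
  rewrite -yl; apply: contra uy => /eqP E; apply/eqP.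
  by apply: (copy_eq (y := z)); rewrite // levelC.
have xz : C6 (x d) (z ord_max) by rewrite -yl level_adj.
have zu := level_adj H3; have xy := level_adj H1.
case: (bridge_kind dm) => dm'.
- by rewrite level_color_low // (low_bridge_label H1 dm') eq_sym copy_color_low.
- by rewrite level_color_top // (copy_label_top y dm') bridge_color_top.
Qed.

Lemma path_two_bridges x y z u d d' :
  level x y d -> level y z ord_max -> level z u d' -> d < m -> d' < m ->
  level_color x y d != level_color z u d'.
Proof.
move=> H1 H2 H3 dm d'm; have H3' : level u z d' by rewrite levelC.
have yz := level_adj H2; have same_label := copy_label_level H2.
rewrite (bridge_last H1 dm) (bridge_last H3' d'm) in yz.
case: (bridge_kind dm) => dm'; case: (bridge_kind d'm) => d'm'.
- move: yz; rewrite -(low_bridge_label H1 dm') -(low_bridge_label H3' d'm').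
  by rewrite same_label C6_irrefl.
- by rewrite level_color_low // level_color_top // eq_sym bridge_color_neq0.
- by rewrite level_color_top // level_color_low // bridge_color_neq0.
- have xL : C6 (x d) (copy_label y) by rewrite (copy_label_top y dm') level_adj.
  have uL : C6 (u d') (copy_label y).
    by rewrite same_label (copy_label_top z d'm') level_adj.
  by move: (C6_triangle_free yz uL); rewrite xL.
Qed.

Lemma path_in_copy x y z u :
  level x y ord_max -> level y z ord_max -> level z u ord_max -> x != z -> u != y ->
  level_color x y ord_max != level_color z u ord_max.
Proof.
move=> H1 H2 H3 xz uy; rewrite !level_color_copy (copy_label_level H1).
rewrite (copy_label_level H2); apply: copy_color_inj; rewrite ?level_adj //.
- by apply: contra xz => /eqP/(copy_eq H1 H2)->.
- apply: contra uy => /eqP E; apply/eqP.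
  by apply: (copy_eq (y := z)); rewrite // levelC.
Qed.

Lemma level_color_path x y z u d1 d2 d3 :
  level x y d1 -> level y z d2 -> level z u d3 -> x != z -> u != y ->
  level_color x y d1 != level_color z u d3.
Proof.
move=> H1 H2 H3 xz uy.
case: (bridge_or_copy d2) => [d2m|d2max].
  case: (bridge_or_copy d1) => [d1m|d1max].
    by rewrite (bridge_unique H1 H2 d1m d2m) eqxx in xz.
  case: (bridge_or_copy d3) => [d3m|d3max].
    by rewrite (bridge_unique H2 H3 d2m d3m) eqxx in uy.
  by subst d1 d3; exact: path_middle_bridge H1 H2 H3 d2m.
subst d2; case: (bridge_or_copy d1) => [d1m|?]; case: (bridge_or_copy d3) => [d3m|?]; subst.
- exact: path_two_bridges H1 H2 H3 d1m d3m.
- exact: path_bridge_copy H1 H2 H3 d1m uy.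
- rewrite eq_sym (level_colorC H1) (level_colorC H3).
  by apply: (path_bridge_copy (x := u) (y := z) (z := y) (u := x)) d3m xz;
    rewrite levelC.
- exact: path_in_copy H1 H2 H3 xz uy.
Qed.

Definition edge_color x y : 'I_3 :=
  if [pick d | level x y d] is Some d then level_color x y d else ord0.

Lemma edge_color_level x y d : level x y d -> edge_color x y = level_color x y d.
Proof.
rewrite /edge_color; case: pickP => [d' H' H|/(_ d)->//].
by rewrite (level_inj H' H).
Qed.

Lemma sierpinski_C6_inj_edge_colorable : inj_edge_colorable (sierpinski C6 m.+1) 3.
Proof.
exists edge_color; split=> [x y /existsP[d H]|x y z u /existsP[d1 H1] /existsP[d2 H2]].
  have H' : level y x d by rewrite levelC.
  by rewrite (edge_color_level H) (edge_color_level H') (level_colorC H).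
move=> /existsP[d3 H3] _ _ xz uy _.
rewrite (edge_color_level H1) (edge_color_level H3).
exact/eqP/(level_color_path H1 H2 H3 xz uy).
Qed.

Definition copy_vertex (a : 'I_6) : vertex := [ffun i => if i == ord_max then a else ord0].

Lemma copy_vertex_inj : injective copy_vertex.
Proof. by move=> a b /ffunP/(_ ord_max); rewrite !ffunE eqxx. Qed.

Lemma copy_vertex_adj : {homo copy_vertex : a b / C6 a b >-> sierpinski C6 m.+1 a b}.
Proof.
move=> a b ab; apply/existsP; exists ord_max; apply/and3P; split.
- apply/forallP => i; apply/implyP => lt_im.
  rewrite !ffunE; suff -> : (i == ord_max) = false by [].
  by apply: contraTF lt_im => /eqP->; rewrite ltnn.
- by rewrite !ffunE eqxx.
- by apply/forallP => i; rewrite ltnNge leq_ord.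
Qed.

End SierpinskiC6.

Lemma inj_edge_colorable_C6_ge3 (V : finType) (adj : rel V) (k : nat) (v : 'I_6 -> V) :
  injective v -> {homo v : a b / C6 a b >-> adj a b} -> inj_edge_colorable adj k -> 2 < k.
Proof.
move=> v_inj v_adj [c [_ c_inj]].
have far (a b e f : 'I_6) : C6 a b -> C6 b e -> C6 e f -> a != e -> f != b ->
    nat_of_ord (c (v a) (v b)) != c (v e) (v f).
  move=> ab be ef ae fb; apply/eqP => /val_inj.
  apply: c_inj; rewrite ?v_adj ?(inj_eq v_inj) //.
  - exact: C6_neq ab.
  - exact: C6_neq be.
  - by rewrite C6C in ef; exact: C6_neq ef.
pose o i := nth ord0 ord6_enum i.
have := far (o 0) (o 1) (o 2) (o 3) isT isT isT isT isT.
have := far (o 2) (o 3) (o 4) (o 5) isT isT isT isT isT.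
have := far (o 4) (o 5) (o 0) (o 1) isT isT isT isT isT.
have := ltn_ord (c (v (o 0)) (v (o 1))); have := ltn_ord (c (v (o 2)) (v (o 3))).
have := ltn_ord (c (v (o 4)) (v (o 5))).
lia.
Qed.

Theorem mainTheorem9 (n : nat) : 0 < n ->
  inj_chromatic_index_is (sierpinski C6 n) 3.
Proof.
case: n => // m _; split; first exact: sierpinski_C6_inj_edge_colorable.
move=> k lt_k3 /(inj_edge_colorable_C6_ge3 (@copy_vertex_inj m) (@copy_vertex_adj m)).
by rewrite ltnNge -ltnS lt_k3.
Qed.
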